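(* For each $s\ge0$, $\big(\mathrm{ad}(\Omega_0)+\mu(\Omega')\big)^s(\mathbf 1\otimes\mathbf I)$ belongs to $\mathcal B^0\otimes\mathcal U(\mathfrak X)$.
   Context: $\mathfrak X$ is the complex Lie algebra generated by $Z_1,Z_{11},Z_2,Z_{22},Z_{12}$ subject only to $[Z_1,Z_2]=[Z_{11},Z_2]=[Z_1,Z_{22}]=0$ and $[Z_{11},Z_{22}]=-[Z_{11},Z_{12}]=[Z_{22},Z_{12}]=-[Z_1-Z_2,Z_{12}]$; $\mathcal U(\mathfrak X)$ its universal enveloping algebra with unit $\mathbf I$. On $\mathbf P^1\times\mathbf P^1$: $\zeta_i=dz_i/z_i$, $\zeta_{ii}=dz_i/(1-z_i)$ ($i=1,2$), $\zeta_{12}=d(z_1z_2)/(1-z_1z_2)$. $S(A)$, $A=\{\zeta_1,\zeta_{11},\zeta_2,\zeta_{22},\zeta_{12}\}$, is the space with basis the words in $A$ (empty word $\mathbf 1$), with concatenation $\circ$. An element $\sum_Ic_I\omega_{i_1}\circ\cdots\circ\omega_{i_s}\in S_s(A)$ satisfies Chen's integrability condition if for each $1\le l<s$, $\sum_Ic_I\omega_{i_1}\otimes\cdots\otimes(\omega_{i_l}\wedge\omega_{i_{l+1}})\otimes\cdots\otimes\omega_{i_s}=0$ as a multiple differential form; $\mathcal B$ is the span of homogeneous elements satisfying this, and $\mathcal B^0$ the subspace of elements none of whose words ends in $\zeta_1$ or $\zeta_2$. On $S(A)\otimes\mathcal U(\mathfrak X)$: $\mathrm{ad}(\omega\otimes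 X)(\varphi\otimes F)=(\omega\circ\varphi)\otimes[X,F]$, $\mu(\omega\otimes X)(\varphi\otimes F)=(\omega\circ\varphi)\otimes XF$ (letters $\omega$, $X\in\mathfrak X$), extended linearly; $\Omega_0=\zeta_1\otimes Z_1+\zeta_2\otimes Z_2$, $\Omega'=\zeta_{11}\otimes Z_{11}+\zeta_{22}\otimes Z_{22}+\zeta_{12}\otimes Z_{12}$. *)

(* C = R[i] with R : realType (i.e. the complex numbers);
   U(X) is realised as the free associative C-algebra on the five generators
   (multinomials' monoid algebra over the free monoid {fmonom letter})
   modulo the two-sided ideal generated by the defining Lie relations. *)
From HB Require Import structures.
From mathcomp Require Import all_boot all_order all_algebra.
From mathcomp Require Import reals.
From mathcomp.real_closed Require Import complex.
From mathcomp.multinomials Require Import monalg.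

Set Implicit Arguments.
Unset Strict Implicit.
Unset Printing Implicit Defensive.

Import GRing.Theory Num.Theory.
Local Open Scope ring_scope.

(* The five letters: used both for the 1-forms zeta_1, zeta_11, zeta_2,
   zeta_22, zeta_12 (alphabet A) and for the generators Z_1, Z_11, Z_2,
   Z_22, Z_12 of the Lie algebra X. *)
Inductive letter := L1 | L11 | L2 | L22 | L12.

Definition letter_code (a : letter) : 'I_5 :=
  match a with
  | L1 => inord 0 | L11 => inord 1 | L2 => inord 2 | L22 => inord 3
  | L12 => inord 4
  end.

Definition letter_decode (i : 'I_5) : letter :=
  match val i with
  | 0 => L1 | 1 => L11 | 2 => L2 | 3 => L22 | _ => L12
  end.

Lemma letter_codeK : cancel letter_code letter_decode.
Proof. by case; rewrite /letter_decode /= inordK. Qed.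

HB.instance Definition _ := Finite.copy letter (can_type letter_codeK).

(* words in A (basis of S(A)); the empty word is the unit 1 *)
Definition word := seq letter.

Section Defs.
Variable R : realType.
Local Notation C := R[i].

(* A point of the affine chart of P^1 x P^1 is a
   pair z = (z1, z2); a 1-form is given by its dz1- and dz2-coefficients,
   a 2-form by its dz1/\dz2-coefficient.  Udom is the open set where all
   the forms zeta are regular. *)
Definition Udom (z : C * C) : Prop :=
  [/\ z.1 != 0, z.1 != 1, z.2 != 0, z.2 != 1 & z.1 * z.2 != 1].

Definition coef1 (a : letter) (z : C * C) : C :=
  match a with
  | L1 => 1 / z.1
  | L11 => 1 / (1 - z.1)
  | L2 => 0
  | L22 => 0
  | L12 => z.2 / (1 - z.1 * z.2)
  end.

Definition coef2 (a : letter) (z : C * C) : C :=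
  match a with
  | L1 => 0
  | L11 => 0
  | L2 => 1 / z.2
  | L22 => 1 / (1 - z.2)
  | L12 => z.1 / (1 - z.1 * z.2)
  end.

Definition comp (a : letter) (e : bool) (z : C * C) : C :=
  if e then coef1 a z else coef2 a z.

Definition wedge (a b : letter) (z : C * C) : C :=
  coef1 a z * coef2 b z - coef2 a z * coef1 b z.

(* The multiple differential form
     w_1 (x) ... (x) (w_{j+1} /\ w_{j+2}) (x) ... (x) w_s
   (0-based j, i.e. l = j+1 in the paper) attached to the word w of length s,
   realised as the external tensor product on the (s-1)-fold product:
   its coefficient at points x_0, ..., x_{s-2} and component choices e_k
   (for the 1-form slots) is the product of the slot coefficients. *)
Definition mfactor (w : word) (j k : nat) (x : nat -> C * C) (e : nat -> bool)
  : C :=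
  if (k < j)%N then comp (nth L1 w k) (e k) (x k)
  else if k == j then wedge (nth L1 w j) (nth L1 w j.+1) (x k)
  else comp (nth L1 w k.+1) (e k) (x k).

Definition mform (s : nat) (w : word) (j : nat) (x : nat -> C * C)
  (e : nat -> bool) : C :=
  \prod_(k < s.-1) mfactor w j k x e.

(* Elements of S(A): coefficient functions on words (with finite support). *)
Definition homog (s : nat) (v : word -> C) : Prop :=
  forall w, v w != 0 -> size w = s.

Definition chen (s : nat) (v : word -> C) : Prop :=
  forall j : nat, (j.+1 < s)%N ->
  forall (x : nat -> C * C) (e : nat -> bool), (forall k, Udom (x k)) ->
  \sum_(t : s.-tuple letter) v t * mform s t j x e = 0.

Definition inB (v : word -> C) : Prop :=
  exists (n : nat) (deg : 'I_n -> nat) (c : 'I_n -> word -> C),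
    (forall i, homog (deg i) (c i) /\ chen (deg i) (c i)) /\
    (forall w, v w = \sum_(i < n) c i w).

Definition ends_in_zeta1_or_zeta2 (w : word) : bool :=
  if w is a :: w' then (last a w' == L1) || (last a w' == L2) else false.

Definition inB0 (v : word -> C) : Prop :=
  inB v /\ forall w, v w != 0 -> ~~ ends_in_zeta1_or_zeta2 w.

(* The free associative algebra C<Z_1, Z_11, Z_2, Z_22, Z_12> = U(free Lie) *)
Definition FA := {malg C[{fmonom letter}]}.

Definition Zg (a : letter) : FA := << fmu a >>.

Definition comm (x y : FA) : FA := x * y - y * x.

Definition lie_rels : seq FA :=
  [:: comm (Zg L1) (Zg L2);
      comm (Zg L11) (Zg L2);
      comm (Zg L1) (Zg L22);
      comm (Zg L11) (Zg L22) + comm (Zg L1 - Zg L2) (Zg L12);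
      comm (Zg L11) (Zg L12) - comm (Zg L1 - Zg L2) (Zg L12);
      comm (Zg L22) (Zg L12) + comm (Zg L1 - Zg L2) (Zg L12)].

Definition in_rel_ideal (x : FA) : Prop :=
  exists (n : nat) (a b : 'I_n -> FA) (r : 'I_n -> 'I_(size lie_rels)),
    x = \sum_(i < n) a i * nth 0 lie_rels (r i) * b i.

(* equality in U(X) = FA / ideal, on representatives *)
Definition ueq (x y : FA) : Prop := in_rel_ideal (x - y).

(* Elements of S(A) (x) U(X) are represented as (finitely supported)
   functions word -> U(X), the image of  w (x) F  being  w |-> F,
   with U(X)-values given by representatives in FA. *)
Definition tens := word -> FA.

Definition one_tens : tens := fun w => if w is [::] then 1 else 0.

Definition Dop (f : tens) : tens := fun w =>
  match w with
  | [::] => 0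
  | a :: w' =>
      match a with
      | L1 => comm (Zg L1) (f w')
      | L2 => comm (Zg L2) (f w')
      | _ => Zg a * f w'
      end
  end.

Definition in_B0_tens (g : tens) : Prop :=
  exists (n : nat) (v : 'I_n -> word -> C) (u : 'I_n -> FA),
    (forall i, inB0 (v i)) /\
    (forall w, ueq (g w) (\sum_(i < n) v i w *: u i)).

End Defs.

From Pilot Require Import Defs.
From HB Require Import structures.
From mathcomp Require Import all_boot all_order all_algebra.
From mathcomp Require Import reals.
From mathcomp.real_closed Require Import complex.
From mathcomp.multinomials Require Import monalg.
From mathcomp Require Import ring.
From Stdlib Require Import Classical.

Set Implicit Arguments.
Unset Strict Implicit.
Unset Printing Implicit Defensive.

Import GRing.Theory Num.Theory.
Local Open Scope ring_scope.

(* Let G_s := (ad(Omega_0) + mu(Omega'))^s (1 (x) I), viewed as a function from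
   words to U(X).  Then G_{s+1}(a w) = Zop_a (G_s w), where Zop_a is ad(Z_a) for
   a in {1, 2} and left multiplication by Z_a otherwise; so G_s lives on words of
   length s and vanishes on words ending in zeta_1 or zeta_2.  Contracting two
   consecutive letters of G_s against zeta_a /\ zeta_b produces sums
   sum_{a,b} (zeta_a /\ zeta_b) Zop_a Zop_b y; by antisymmetry this is half of
   sum_{a,b} (zeta_a /\ zeta_b) ([Z_a, Z_b] y - ...), which vanishes in U(X)
   because the defining relations of X match the linear relations among the
   2-forms zeta_a /\ zeta_b.  So Chen's condition holds for G_s modulo the ideal.
   Finally, the linear relations modulo the ideal among the finitely many G_s(t)
   form a subspace of C^(A^s); a projection with exactly that kernel turns the
   coordinates of G_s into elements of B^0. *)

Section AdOrMul.
Variable A : pzRingType.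

Definition ad_or_mul (d : bool) (x y : A) : A := x * y - (if d then y * x else 0).

Lemma ad_or_mul_comm d1 d2 x1 x2 y :
  ad_or_mul d1 x1 (ad_or_mul d2 x2 y) - ad_or_mul d2 x2 (ad_or_mul d1 x1 y)
  = ad_or_mul (d1 && d2) (x1 * x2 - x2 * x1) y.
Proof.
case: d1; case: d2; rewrite /ad_or_mul /= !(mulr0, mul0r, addr0, subr0, mulrBr,
  mulrBl, mulrA, opprB, opprD, opprK, addrA, subrK) //.
set a := x1 * x2 * y; set b := x1 * y * x2; set c := y * x2 * x1.
set d := x2 * y * x1; set e := y * x1 * x2; set f := x2 * x1 * y.
rewrite [a - b + c - d + b]addrAC [a - b + c + b]addrAC subrK.
by rewrite [a + c - d - e]addrAC subrK [a - f + c]addrAC addrAC.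
Qed.

Lemma commutator_subl (x y z : A) :
  (x - y) * z - z * (x - y) = (x * z - z * x) - (y * z - z * y).
Proof. by rewrite mulrBl mulrBr !opprB addrACA [RHS]addrACA (addrC (- (y * z))). Qed.

Lemma ad_or_mul_ad1 x : ad_or_mul true x 1 = 0.
Proof. by rewrite /ad_or_mul mulr1 mul1r subrr. Qed.

Lemma ad_or_mul0 d x : ad_or_mul d x 0 = 0.
Proof. by rewrite /ad_or_mul mulr0 mul0r; case: d; rewrite subr0. Qed.

End AdOrMul.

Lemma ad_or_mul_lincomb (K : pzRingType) (A : lalgType K) d (x : A) (J : finType)
    (c : J -> K) (y : J -> A) :
  (forall k u, x * (k *: u) = k *: (x * u)) ->
  ad_or_mul d x (\sum_j c j *: y j) = \sum_j c j *: ad_or_mul d x (y j).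
Proof.
move=> xZ; rewrite /ad_or_mul mulr_sumr; case: d; last first.
  by rewrite subr0; apply: eq_bigr => j _; rewrite xZ subr0.
by rewrite mulr_suml -sumrB; apply: eq_bigr => j _; rewrite xZ -scalerAl scalerBr.
Qed.

Lemma sum_scale_ad_or_mul (K : pzRingType) (A : lalgType K) (J : finType)
    (w : J -> J -> K) (d : J -> J -> bool) (x : J -> J -> A) (y : A) :
  \sum_a \sum_b w a b *: ad_or_mul (d a b) (x a b) y =
  (\sum_a \sum_b w a b *: x a b) * y -
    \sum_a \sum_b w a b *: (if d a b then y * x a b else 0).
Proof.
rewrite mulr_suml -sumrB; apply: eq_bigr => a _.
by rewrite mulr_suml -sumrB; apply: eq_bigr => b _; rewrite scalerBr scalerAl.
Qed.

Section GeneratedIdeal.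
Variables (A : pzRingType) (S : seq A).

Definition in_ideal (x : A) : Prop :=
  exists (n : nat) (a b : 'I_n -> A) (r : 'I_n -> 'I_(size S)),
    x = \sum_(i < n) a i * nth 0 S (r i) * b i.

Lemma in_ideal0 : in_ideal 0.
Proof. by exists 0%N, (fun _ => 0), (fun _ => 0), (widen_ord (leq0n _)); rewrite big_ord0. Qed.

Lemma in_ideal_nth k : (k < size S)%N -> in_ideal (nth 0 S k).
Proof.
move=> lt_k; exists 1%N, (fun _ => 1), (fun _ => 1), (fun _ => Ordinal lt_k).
by rewrite big_ord1 mul1r mulr1.
Qed.

Lemma in_idealD x y : in_ideal x -> in_ideal y -> in_ideal (x + y).
Proof.
move=> [n [a [b [r ->]]]] [m [a' [b' [r' ->]]]].
pose glue T (f : 'I_n -> T) (f' : 'I_m -> T) i :=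
  match split i with inl j => f j | inr j => f' j end.
exists (n + m)%N, (glue _ a a'), (glue _ b b'), (glue _ r r').
rewrite big_split_ord /glue; congr (_ + _); apply: eq_bigr => i _.
- by rewrite (unsplitK (inl i : 'I_n + 'I_m)).
- by rewrite (unsplitK (inr i : 'I_n + 'I_m)).
Qed.

Lemma in_idealMl y x : in_ideal x -> in_ideal (y * x).
Proof.
move=> [n [a [b [r ->]]]]; exists n, (fun i => y * a i), b, r.
by rewrite mulr_sumr; apply: eq_bigr => i _; rewrite !mulrA.
Qed.

Lemma in_idealMr y x : in_ideal x -> in_ideal (x * y).
Proof.
move=> [n [a [b [r ->]]]]; exists n, a, (fun i => b i * y), r.
by rewrite mulr_suml; apply: eq_bigr => i _; rewrite mulrA.
Qed.

Lemma in_idealN x : in_ideal x -> in_ideal (- x).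
Proof. by rewrite -mulN1r; apply: in_idealMl. Qed.

Lemma in_idealB x y : in_ideal x -> in_ideal y -> in_ideal (x - y).
Proof. by move=> Ix Iy; apply: in_idealD => //; apply: in_idealN. Qed.

Lemma in_ideal_sum (J : finType) (F : J -> A) :
  (forall j, in_ideal (F j)) -> in_ideal (\sum_j F j).
Proof. by move=> IF; apply: big_ind => //; [apply: in_ideal0 | apply: in_idealD]. Qed.

Lemma in_ideal_ad_or_mul d x y : in_ideal y -> in_ideal (ad_or_mul d x y).
Proof.
move=> Iy; apply: in_idealB; first exact: in_idealMl.
by case: d; [apply: in_idealMr | apply: in_ideal0].
Qed.

End GeneratedIdeal.

Lemma in_idealZ (K : pzRingType) (A : lalgType K) (S : seq A) (c : K) (x : A) :
  in_ideal S x -> in_ideal S (c *: x).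
Proof. by rewrite -mulr_algl; apply: in_idealMl. Qed.

Lemma in_ideal_halve (K : numFieldType) (A : lalgType K) (S : seq A) (x : A) :
  in_ideal S (x *+ 2) -> in_ideal S x.
Proof.
move=> Ix2; have -> : x = 2^-1 *: (x *+ 2).
  by rewrite -scaler_nat scalerA mulVf ?pnatr_eq0 ?scale1r.
exact: in_idealZ.
Qed.

Lemma sum_scale_sub_lincomb (K : pzRingType) (V : lmodType K) (J : finType)
    (w t s : J -> J -> K) (F : J -> J -> V) (T Q : V) :
  \sum_a \sum_b w a b * t a b = 0 -> \sum_a \sum_b w a b * s a b = 0 ->
  \sum_a \sum_b w a b *: F a b =
  \sum_a \sum_b w a b *: (F a b - (t a b *: T + s a b *: Q)).
Proof.
move=> wt0 ws0.
transitivity (\sum_a \sum_b w a b *: F a b -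
   ((\sum_a \sum_b w a b * t a b) *: T + (\sum_a \sum_b w a b * s a b) *: Q)).
  by rewrite wt0 ws0 !scale0r addr0 subr0.
rewrite !scaler_suml -big_split -sumrB; apply: eq_bigr => a _ /=.
rewrite !scaler_suml -big_split -sumrB; apply: eq_bigr => b _.
by rewrite scalerBr scalerDr !scalerA.
Qed.

Lemma sum_natr_eq_scale (K : pzRingType) (V : lmodType K) (J : finType)
    (g : J -> V) (j : J) :
  \sum_i (i == j)%:R *: g i = g j.
Proof.
rewrite (bigD1 j) //= eqxx scale1r big1 ?addr0 // => i /negbTE ->.
exact: scale0r.
Qed.

Lemma sum_skew_scale (K : pzRingType) (V : lmodType K) (J : finType)
    (w : J -> J -> K) (F : J -> J -> V) :
  (forall a b, w b a = - w a b) ->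
  (\sum_a \sum_b w a b *: F a b) *+ 2 = \sum_a \sum_b w a b *: (F a b - F b a).
Proof.
move=> wN.
have -> : \sum_a \sum_b w a b *: (F a b - F b a) =
    \sum_a \sum_b w a b *: F a b - \sum_a \sum_b w a b *: F b a.
  rewrite -sumrB; apply: eq_bigr => a _.
  by rewrite -sumrB; apply: eq_bigr => b _; rewrite scalerBr.
rewrite [X in _ - X]exchange_big /= -sumrN mulr2n; congr (_ + _).
apply: eq_bigr => a _; rewrite -sumrN; apply: eq_bigr => b _.
by rewrite [w b a]wN scaleNr opprK.
Qed.

Lemma exchange_sum_scale (K : comPzRingType) (V : lmodType K) (I J : finType)
    (w : I -> I -> K) (c : J -> K) (H : I -> I -> J -> V) :
  \sum_a \sum_b \sum_t (w a b * c t) *: H a b t =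
  \sum_t c t *: \sum_a \sum_b w a b *: H a b t.
Proof.
under eq_bigr => a _ do rewrite exchange_big.
rewrite exchange_big; apply: eq_bigr => t _.
rewrite scaler_sumr; apply: eq_bigr => a _.
by rewrite scaler_sumr; apply: eq_bigr => b _; rewrite scalerA mulrC.
Qed.

Lemma malg_scalerAr (K : comNzRingType) (M : monomType) (c : K) (x y : {malg K[M]}) :
  x * (c *: y) = c *: (x * y).
Proof.
have mulC_malg (u : {malg K[M]}) : u * c%:MP = c *: u.
  rewrite malgM_def malgZ_def fgmulgU; apply: eq_bigr => k _.
  by rewrite mulm1 mulrC.
by rewrite -mul_malgC mulrA mulC_malg scalerAl.
Qed.

Section SubspaceOfRows.
Variables (F : fieldType) (n : nat) (K : 'rV[F]_n -> Prop).
Hypotheses (K0 : K 0) (KD : forall u v, K u -> K v -> K (u + v))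
  (KZ : forall (a : F) v, K v -> K (a *: v)).

Lemma subspace_rowspace : exists M : 'M[F]_n, forall c, K c <-> (c <= M)%MS.
Proof.
suff [M [MK KM]] : exists M : 'M[F]_n,
    (forall c, (c <= M)%MS -> K c) /\ (forall c, K c -> (c <= M)%MS).
  by exists M => c; split; [apply: KM | apply: MK].
suff grow k : exists M : 'M[F]_n, (forall c, (c <= M)%MS -> K c) /\
    ((k <= \rank M)%N \/ forall c, K c -> (c <= M)%MS).
  have [M [MK [/leq_trans/(_ (rank_leq_col M))|KM]]] := grow n.+1; last by exists M.
  by rewrite ltnn.
elim: k => [|k [M [MK [le_kM|KM]]]]; last by exists M; split=> //; right.
  exists 0; split; last by left.
  by move=> c; rewrite submx0 => /eqP ->.
have [KM|] := classic (forall c, K c -> (c <= M)%MS); first by exists M; split=> //; right.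
move=> /not_all_ex_not [c nKM]; have [Kc /negP cM] := imply_to_and _ _ nKM.
exists (M + c)%MS; split; last first.
  left; apply: leq_ltn_trans le_kM _.
  rewrite (ltn_leqif (mxrank_leqif_sup (addsmxSl M c))).
  by apply: contra cM => /(submx_trans (addsmxSr M c)).
move=> d /sub_addsmxP [[u v] /= ->]; apply: KD; first by apply: MK; apply: submxMl.
by rewrite [v]mx11_scalar mul_scalar_mx; apply: KZ.
Qed.

Lemma subspace_kernel_projection :
  exists Q : 'M[F]_n, (forall c, K c -> c *m Q = 0) /\ (forall c, K (c - c *m Q)).
Proof.
have [M KM] := subspace_rowspace.
exists (proj_mx (M^C)%MS M); split=> [c /KM cM|c]; first by rewrite proj_mx_0 // capmxC capmx_compl.
apply/KM/proj_mx_compl_sub; apply: submx_full.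
by rewrite addsmxC addsmx_compl_full.
Qed.

End SubspaceOfRows.

Section RelationsModulo.
Variables (F : fieldType) (V : lmodType F) (P : V -> Prop).
Hypotheses (P0 : P 0) (PD : forall x y, P x -> P y -> P (x + y))
  (PZ : forall (a : F) x, P x -> P (a *: x)).
Variables (J : finType) (g : J -> V).

(* v k j are the entries of a projection of F^J whose kernel is the space of
   linear relations among the g j modulo P. *)
Lemma relations_mod_projection : exists v : J -> J -> F,
  (forall c : J -> F, P (\sum_j c j *: g j) -> forall k, \sum_j c j * v k j = 0) /\
  (forall j, P (g j - \sum_k v k j *: g k)).
Proof.
pose Phi (c : 'rV[F]_#|J|) := \sum_j c 0 (enum_rank j) *: g j.
have PhiD c d : Phi (c + d) = Phi c + Phi d.
  by rewrite -big_split; apply: eq_bigr => j _; rewrite mxE scalerDl.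
have PhiZ a c : Phi (a *: c) = a *: Phi c.
  by rewrite scaler_sumr; apply: eq_bigr => j _; rewrite mxE scalerA.
have [|||Q [QK KQ]] := @subspace_kernel_projection F #|J| (fun c => P (Phi c)).
- by rewrite /Phi big1 // => j _; rewrite mxE scale0r.
- by move=> c d Pc Pd; rewrite PhiD; apply: PD.
- by move=> a c Pc; rewrite PhiZ; apply: PZ.
exists (fun k j => Q (enum_rank j) (enum_rank k)); split=> [c Pc k | j].
  have Pc' : P (Phi (\row_i c (enum_val i))).
    by rewrite /Phi; under eq_bigr do rewrite mxE enum_rankK.
  have := congr1 (fun m : 'rV_#|J| => m 0 (enum_rank k)) (QK _ Pc').
  rewrite /= !mxE (reindex enum_rank) /=; last first.
    by exists enum_val => i _; [apply: enum_rankK | apply: enum_valK].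
  by under eq_bigr do rewrite mxE enum_rankK.
have := KQ (delta_mx 0 (enum_rank j)); rewrite -rowE /Phi.
under eq_bigr do rewrite !mxE scalerBl.
rewrite sumrB (bigD1 j) //= eqxx scale1r big1 ?addr0 // => i ne_ij.
by rewrite (inj_eq enum_rank_inj) (negbTE ne_ij) scale0r.
Qed.
End RelationsModulo.

Lemma sum_tuple_cons (V : nmodType) (T : finType) n (G : n.+1.-tuple T -> V) :
  \sum_t G t = \sum_a \sum_(t : n.-tuple T) G [tuple of a :: t].
Proof.
rewrite pair_big /= (reindex (fun p : T * n.-tuple T => [tuple of p.1 :: p.2])) //.
exists (fun t => (thead t, [tuple of behead t])) => [[a t] _ | t _].
  by rewrite theadE; congr pair; apply: val_inj.
by apply: val_inj; case: t => [[|a s] ?].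
Qed.

Lemma letter_decodeK : cancel letter_decode letter_code.
Proof. by move=> [[|[|[|[|[|m]]]]] lt_m5]; apply: val_inj; rewrite /= ?inordK. Qed.

Lemma sum_letter (V : nmodType) (F : letter -> V) :
  \sum_a F a = F L1 + F L11 + F L2 + F L22 + F L12.
Proof.
rewrite (reindex letter_decode); last first.
  by exists letter_code => a _; [apply: letter_decodeK | apply: letter_codeK].
by rewrite !big_ord_recl big_ord0 /= addr0 !addrA.
Qed.

Section Integrability.
Variable R : realType.
Local Notation C := R[i].
Local Notation FA := (FA R).
Local Notation Z := (@Zg R).
(* [in_rel_ideal R] unfolds to this predicate. *)
Local Notation I := (in_ideal (lie_rels R)).

Definition letter_rank (a : letter) : nat :=
  match a with L1 => 0 | L11 => 1 | L2 => 2 | L22 => 3 | L12 => 4 end.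

Definition is_ad (a : letter) : bool := if a is (L1 | L2) then true else false.

Definition Zop (a : letter) : FA -> FA := ad_or_mul (is_ad a) (Z a).

Lemma Zop_comm a b y :
  Zop a (Zop b y) - Zop b (Zop a y) = ad_or_mul (is_ad a && is_ad b) (comm (Z a) (Z b)) y.
Proof. exact: ad_or_mul_comm. Qed.

Lemma Zop0 a : Zop a 0 = 0.
Proof. exact: ad_or_mul0. Qed.

Lemma in_ideal_Zop a y : I y -> I (Zop a y).
Proof. exact: in_ideal_ad_or_mul. Qed.

Lemma Zop_lincomb (J : finType) a (c : J -> C) (y : J -> FA) :
  Zop a (\sum_j c j *: y j) = \sum_j c j *: Zop a (y j).
Proof. by apply: ad_or_mul_lincomb => k u; apply: malg_scalerAr. Qed.

Lemma Dop_cons (f : tens R) a w : Dop f (a :: w) = Zop a (f w).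
Proof.
by case: a; [| apply: esym (subr0 _) | | apply: esym (subr0 _) | apply: esym (subr0 _)].
Qed.

Lemma commC (x y : FA) : comm x y = - comm y x.
Proof. by rewrite /comm opprB. Qed.

Lemma wedgeC a b (z : C * C) : wedge a b z = - wedge b a z.
Proof. by rewrite /wedge opprB [Defs.coef1 b z * _]mulrC [Defs.coef2 b z * _]mulrC. Qed.

Lemma wedgexx a (z : C * C) : wedge a a z = 0.
Proof. by rewrite /wedge mulrC subrr. Qed.

Definition skew (f : letter -> letter -> C) a b : C := f a b - f b a.

Definition brT : FA := comm (Z L1 - Z L2) (Z L12).
Definition brQ : FA := comm (Z L2) (Z L12).

(* Modulo the relations of X, [Z_a, Z_b] = tau_ab brT + sigma_ab brQ whenever
   zeta_a /\ zeta_b <> 0, where tau = skew tau0 and sigma = skew sigma0;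
   rho is the remainder. *)
Definition tau0 (a b : letter) : C :=
  match a, b with L1, L12 | L11, L12 => 1 | L11, L22 | L22, L12 => -1 | _, _ => 0 end.
Definition sigma0 (a b : letter) : C :=
  match a, b with L1, L12 | L2, L12 => 1 | _, _ => 0 end.

Definition rho (a b : letter) : FA :=
  comm (Z a) (Z b) - (skew tau0 a b *: brT + skew sigma0 a b *: brQ).

Lemma rhoC a b : rho a b = - rho b a.
Proof.
have skewN f : skew f b a = - skew f a b by rewrite /skew opprB.
rewrite /rho !skewN [comm (Z b) _]commC.
move: (comm _ _) (skew tau0 a b) (skew sigma0 a b) brT brQ => c t s T Q.
by rewrite !scaleNr -opprD opprK opprD.
Qed.

Lemma Udom_neq0 (z : C * C) : Udom z ->
  [/\ z.1 != 0, 1 - z.1 != 0, z.2 != 0, 1 - z.2 != 0 & 1 - z.1 * z.2 != 0].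
Proof. by case=> *; split=> //; rewrite subr_eq0 eq_sym. Qed.

(* The relations (zeta_1 + zeta_11) /\ zeta_12 = zeta_11 /\ zeta_22 + zeta_22 /\ zeta_12
   and (zeta_1 + zeta_2) /\ zeta_12 = 0 among the 2-forms. *)
Lemma sum_wedge_tau (z : C * C) : Udom z ->
  \sum_a \sum_b wedge a b z * skew tau0 a b = 0.
Proof.
case/Udom_neq0 => nz1 nz1' nz2 nz2' nz12.
rewrite !sum_letter /skew /tau0 /wedge /Defs.coef1 /Defs.coef2 /=.
by field; rewrite nz1 nz1' nz2 nz2' nz12.
Qed.

Lemma sum_wedge_sigma (z : C * C) : Udom z ->
  \sum_a \sum_b wedge a b z * skew sigma0 a b = 0.
Proof.
case/Udom_neq0 => nz1 nz1' nz2 nz2' nz12.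
rewrite !sum_letter /skew /sigma0 /wedge /Defs.coef1 /Defs.coef2 /=.
by field; rewrite nz1 nz1' nz2 nz2' nz12.
Qed.

Lemma lie_rel_in_ideal k : (k < 6)%N -> I (nth 0 (lie_rels R) k).
Proof. exact: (@in_ideal_nth _ (lie_rels R)). Qed.

Lemma commBl (x y z : FA) : comm (x - y) z = comm x z - comm y z.
Proof. exact: commutator_subl. Qed.

Lemma skew_ord f a b : (letter_rank a < letter_rank b)%N ->
  (forall a b, (letter_rank a < letter_rank b)%N -> f b a = 0) -> skew f a b = f a b.
Proof. by move=> lt_ab f0; rewrite /skew (f0 a b) // subr0. Qed.

Lemma rho_ordE a b : (letter_rank a < letter_rank b)%N ->
  rho a b = comm (Z a) (Z b) - (tau0 a b *: brT + sigma0 a b *: brQ).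
Proof. by move=> lt_ab; rewrite /rho !skew_ord // => c d; case: c; case: d. Qed.

Lemma brT_add_brQ : brT + brQ = comm (Z L1) (Z L12).
Proof. by rewrite /brT /brQ (commBl (Z L1) (Z L2) (Z L12)) (subrK (comm (Z L2) (Z L12))). Qed.

(* Elements of FA are generalized before rewriting: letting Coq unify two
   distinct concrete elements of FA unfolds the monoid-algebra operations. *)
Lemma wedge_rho_in_ideal a b (z : C * C) : I (wedge a b z *: rho a b).
Proof.
wlog lt_ab : a b / (letter_rank a < letter_rank b)%N.
  move=> H; have [/H //|/H|eq_ab] := ltngtP (letter_rank a) (letter_rank b).
    by rewrite wedgeC [rho a b]rhoC scaleNr scalerN.
  have -> : b = a by move: eq_ab; case: a; case: b.
  by rewrite wedgexx scale0r; apply: in_ideal0.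
have wedge0 : wedge a b z = 0 -> I (wedge a b z *: rho a b).
  by move->; rewrite scale0r; apply: in_ideal0.
case: a lt_ab wedge0; case: b => // lt_ab wedge0.
- by apply: wedge0; rewrite /wedge /= mulr0 mul0r subrr.
- apply: in_idealZ; have : I (comm (Z L1) (Z L2)) := @lie_rel_in_ideal 0 isT.
  rewrite rho_ordE //; move: (comm _ _) brT brQ => c T Q.
  by rewrite scale0r scale0r addr0 subr0.
- apply: in_idealZ; have : I (comm (Z L1) (Z L22)) := @lie_rel_in_ideal 2 isT.
  rewrite rho_ordE //; move: (comm _ _) brT brQ => c T Q.
  by rewrite scale0r scale0r addr0 subr0.
- apply: in_idealZ; rewrite rho_ordE // -brT_add_brQ.
  move: brT brQ => T Q; rewrite scale1r scale1r subrr; exact: in_ideal0.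
- apply: in_idealZ; have : I (comm (Z L11) (Z L2)) := @lie_rel_in_ideal 1 isT.
  rewrite rho_ordE //; move: (comm _ _) brT brQ => c T Q.
  by rewrite scale0r scale0r addr0 subr0.
- apply: in_idealZ; have : I (comm (Z L11) (Z L22) + brT) := @lie_rel_in_ideal 3 isT.
  rewrite rho_ordE //; move: (comm _ _) brT brQ => c T Q.
  by rewrite scaleN1r scale0r addr0 opprK.
- apply: in_idealZ; have : I (comm (Z L11) (Z L12) - brT) := @lie_rel_in_ideal 4 isT.
  rewrite rho_ordE //; move: (comm _ _) brT brQ => c T Q.
  by rewrite scale1r scale0r addr0.
- by apply: wedge0; rewrite /wedge /= mulr0 mul0r subrr.
- apply: in_idealZ; rewrite rho_ordE // -/brQ; move: brT brQ => T Q.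
  by rewrite scale0r scale1r add0r subrr; exact: in_ideal0.
- apply: in_idealZ; have : I (comm (Z L22) (Z L12) + brT) := @lie_rel_in_ideal 5 isT.
  rewrite rho_ordE //; move: (comm _ _) brT brQ => c T Q.
  by rewrite scaleN1r scale0r addr0 opprK.
Qed.

Lemma sum_wedge_comm_in_ideal (z : C * C) : Udom z ->
  I (\sum_a \sum_b wedge a b z *: comm (Z a) (Z b)).
Proof.
move=> Uz; rewrite (@sum_scale_sub_lincomb _ _ _ _ (skew tau0) (skew sigma0) _ brT brQ);
  [|exact: sum_wedge_tau|exact: sum_wedge_sigma].
by apply: in_ideal_sum => a; apply: in_ideal_sum => b; apply: wedge_rho_in_ideal.
Qed.

Lemma bracket_ad_in_ideal a b : is_ad a -> is_ad b -> I (comm (Z a) (Z b)).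
Proof.
case: a; case: b => // _ _.
- by rewrite /comm subrr; apply: in_ideal0.
- exact: (@lie_rel_in_ideal 0 isT).
- by rewrite commC; apply/in_idealN/(@lie_rel_in_ideal 0 isT).
- by rewrite /comm subrr; apply: in_ideal0.
Qed.

Lemma sum_wedge_Zop_Zop_in_ideal (z : C * C) (y : FA) : Udom z ->
  I (\sum_a \sum_b wedge a b z *: Zop a (Zop b y)).
Proof.
move=> Uz; apply: in_ideal_halve.
rewrite sum_skew_scale => [|a b]; last exact: wedgeC.
under eq_bigr => a _ do under eq_bigr => b _ do rewrite Zop_comm.
rewrite sum_scale_ad_or_mul; apply: in_idealB.
  exact/in_idealMr/sum_wedge_comm_in_ideal.
apply: in_ideal_sum => a; apply: in_ideal_sum => b; apply: in_idealZ.
case: ifP => [/andP[ad_a ad_b] | _]; last exact: in_ideal0.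
exact/in_idealMl/bracket_ad_in_ideal.
Qed.

End Integrability.

Section DopIteration.
Variable R : realType.
Local Notation C := R[i].
Local Notation I := (in_ideal (lie_rels R)).
Local Notation G s := (iter s (@Dop R) (@one_tens R)).

Lemma Dop_iter_size s w : size w != s -> G s w = 0.
Proof.
elim: s w => [|s IH] [|a w] // size_w.
by rewrite iterS Dop_cons IH // Zop0.
Qed.

Lemma Dop_iter_ends s w : ends_in_zeta1_or_zeta2 w -> G s w = 0.
Proof.
elim: s w => [|s IH] [|a w] // ends_aw; rewrite iterS Dop_cons.
case: w ends_aw => [ad_a | b w ends_bw]; last by rewrite IH // Zop0.
case: s {IH} => [|s]; last exact: Zop0.
have : (a == L1) || (a == L2) := ad_a.
by case/orP => /eqP ->; apply: ad_or_mul_ad1.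
Qed.

Lemma mformS s a (t : word) j (x : nat -> C * C) e :
  mform s.+2 (a :: t) j.+1 x e =
  Defs.comp a (e 0%N) (x 0%N) * mform s.+1 t j (fun k => x k.+1) (fun k => e k.+1).
Proof. by rewrite /mform big_ord_recl. Qed.

Lemma mform0 s a b (t : word) (x : nat -> C * C) e :
  mform s.+2 (a :: b :: t) 0 x e =
  wedge a b (x 0%N) * \prod_(k < s) Defs.comp (nth L1 t k) (e k.+1) (x k.+1).
Proof. by rewrite /mform big_ord_recl. Qed.

Lemma Dop_iter_chen s j (x : nat -> C * C) e : (j.+1 < s)%N -> (forall k, Udom (x k)) ->
  I (\sum_(t : s.-tuple letter) mform s t j x e *: G s t).
Proof.
elim: s j x e => [|s IH] j x e lt_js Ux //.
case: s IH lt_js => [|s] IH lt_js; first by case: j lt_js.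
rewrite sum_tuple_cons; case: j lt_js => [|j] lt_js.
  under eq_bigr => a _ do rewrite sum_tuple_cons.
  under eq_bigr => a _ do under eq_bigr => b _ do under eq_bigr => t _
    do rewrite mform0 !iterS !Dop_cons.
  rewrite exchange_sum_scale; apply: in_ideal_sum => t.
  exact/in_idealZ/sum_wedge_Zop_Zop_in_ideal.
under eq_bigr => a _ do under eq_bigr => t _ do rewrite mformS iterS Dop_cons -scalerA.
under eq_bigr => a _ do rewrite -scaler_sumr -Zop_lincomb.
apply: in_ideal_sum => a; apply/in_idealZ/in_ideal_Zop.
exact: IH.
Qed.

End DopIteration.

Section TupleCoefficients.
Variable R : realType.
Local Notation C := R[i].

Definition tuple_coef s (f : s.-tuple letter -> C) (w : word) : C :=
  if insub w is Some t then f t else 0.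

Lemma tuple_coefE s f (t : s.-tuple letter) : tuple_coef f t = f t.
Proof. by rewrite /tuple_coef valK. Qed.

Lemma tuple_coef_out s f w : size w != s -> tuple_coef (s := s) f w = 0.
Proof. by move=> size_w; rewrite /tuple_coef insubN. Qed.

Lemma inB0_tuple_coef s (f : s.-tuple letter -> C) :
  (forall j x e, (j.+1 < s)%N -> (forall k, Udom (x k)) ->
     \sum_t f t * mform s t j x e = 0) ->
  (forall t : s.-tuple letter, ends_in_zeta1_or_zeta2 t -> f t = 0) ->
  inB0 (tuple_coef f).
Proof.
move=> chen_f ends_f; split.
  exists 1%N, (fun=> s), (fun=> tuple_coef f); split=> [_|w]; last by rewrite big_ord1.
  split=> [w|j lt_js x e Ux].
    by apply: contraNeq => /tuple_coef_out ->; rewrite eqxx.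
  by under eq_bigr do rewrite tuple_coefE; apply: chen_f.
move=> w; rewrite /tuple_coef; case: insubP => [t _ <-|_]; last by rewrite eqxx.
by apply: contra => /ends_f ->.
Qed.

Lemma in_B0_tens_of (J : finType) (v : J -> word -> C) (u : J -> FA R) (g : tens R) :
  (forall k, inB0 (v k)) -> (forall w, ueq (g w) (\sum_k v k w *: u k)) ->
  in_B0_tens g.
Proof.
move=> B0v gE; exists #|J|, (fun i => v (enum_val i)), (fun i => u (enum_val i)).
split=> [i|w]; first exact: B0v.
by rewrite -(big_enum_val (fun k => v k w *: u k)); apply: gE.
Qed.

End TupleCoefficients.

Theorem proposition6p2 (R : realType) (s : nat) :
  in_B0_tens (iter s (@Dop R) (@one_tens R)).
Proof.
set G := iter s _ _.
have [v [v_rel G_red]] := relations_mod_projection (@in_ideal0 _ (lie_rels R))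
  (@in_idealD _ _) (@in_idealZ _ _ _) (fun t : s.-tuple letter => G t).
apply: (@in_B0_tens_of _ _ (fun k => tuple_coef (v k)) (fun k => G k)) => [k|w].
  apply: inB0_tuple_coef => [j x e lt_js Ux | t ends_t].
    rewrite -[RHS](v_rel _ (Dop_iter_chen e lt_js Ux) k).
    by apply: eq_bigr => t _; rewrite mulrC.
  have G_t0 : in_ideal (lie_rels R) (\sum_u (u == t)%:R *: G u).
    by rewrite sum_natr_eq_scale /G Dop_iter_ends //; apply: in_ideal0.
  by rewrite -(v_rel _ G_t0 k) -[LHS]sum_natr_eq_scale.
rewrite /ueq /tuple_coef; case: insubP => [t _ <- | size_w]; first exact: G_red.
rewrite /G Dop_iter_size // big1 => [|k _]; last exact: scale0r.
by rewrite subrr; apply: in_ideal0.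
Qed.
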